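(* There exists $\epsilon_0>0$ such that the following holds for every fixed $\epsilon\in(0,\epsilon_0)$. Let $(G_n)$ be a sequence of graphs, where $G_n$ has $n$ vertices and is $d$-regular for some $d=d(n)\ge 1$, and let $p=\frac{1-\epsilon}{d}$. Then, with probability tending to one as $n\to\infty$, every connected component of $(G_n)_p$ has at most $\frac{9\log n}{\epsilon^2}$ vertices.
   Context: For a graph $G$ and $p\in[0,1]$, $G_p$ denotes the random spanning subgraph of $G$ obtained by retaining each edge of $G$ independently with probability $p$ (bond percolation). $\log$ is the natural logarithm. *)

From HB Require Import structures.
From mathcomp Require Import all_boot all_order all_algebra.
From mathcomp Require Import all_classical all_reals all_analysis.
Set Implicit Arguments. Unset Strict Implicit. Unset Printing Implicit Defensive.
Import Order.TTheory GRing.Theory Num.Theory.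
Local Open Scope ring_scope.

Definition simple_graph (n : nat) (e : rel 'I_n) : Prop :=
  symmetric e /\ irreflexive e.

Definition regular (n : nat) (e : rel 'I_n) (d : nat) : Prop :=
  forall x : 'I_n, #|[set y | e x y]| = d.

(* Edge set: each undirected edge {x,y} is represented once as (x,y), x < y. *)
Definition edges (n : nat) (e : rel 'I_n) : {set 'I_n * 'I_n} :=
  [set xy : 'I_n * 'I_n | (val xy.1 < val xy.2)%N && e xy.1 xy.2].

Definition kept (n : nat) (S : {set 'I_n * 'I_n}) : rel 'I_n :=
  fun x y => ((x, y) \in S) || ((y, x) \in S).

Definition component (n : nat) (S : {set 'I_n * 'I_n}) (x : 'I_n) : {set 'I_n} :=
  [set y | connect (kept S) x y].

Definition perc_weight (R : realType) (n : nat) (e : rel 'I_n) (p : R)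
  (S : {set 'I_n * 'I_n}) : R :=
  p ^+ #|S| * (1 - p) ^+ (#|edges e| - #|S|).

Definition perc_prob (R : realType) (n : nat) (e : rel 'I_n) (p : R)
  (A : pred {set 'I_n * 'I_n}) : R :=
  \sum_(S in powerset (edges e) | A S) perc_weight e p S.

Definition has_big_component (R : realType) (n : nat) (M : R)
  : pred {set 'I_n * 'I_n} :=
  fun S => [exists x : 'I_n, M < (#|component S x|)%:R].

(* With theta := expR (eps^2/6) and p := (1 - eps)/d, exploring the component of a vertex
   one vertex at a time gives E[theta ^ |C(v)|] <= 1 + eps: each explored vertex costs a
   factor theta and opens at most d edges, each retained with probability p, and
   theta * (1 + p eps)^d <= expR (eps^2/6 + (1 - eps) eps) <= 1 + eps for eps <= 1/10.
   By Markov's inequality and a union bound over the n vertices, a component with more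
   than M = 9 log n / eps^2 vertices has probability at most
   n (1 + eps) theta^(-M) = (1 + eps) n^(-1/2). *)
From HB Require Import structures.
From mathcomp Require Import all_boot all_order all_algebra.
From mathcomp Require Import all_classical all_reals all_analysis.
From mathcomp Require Import ring lra.
From mathcomp Require Import fintype finset.
Import Order.TTheory GRing.Theory Num.Theory.
Local Open Scope ring_scope.

Set Implicit Arguments.
Unset Strict Implicit.

Lemma finset_ind (K : finType) (P : {set K} -> Prop) :
  P set0 -> (forall (x : K) (E : {set K}), x \notin E -> P E -> P (x |: E)) -> forall E, P E.
Proof.
move=> P0 PU1 E; elim: {E}#|E| {-2}E (erefl #|E|) => [|m IHm] E cardE.
  by move/eqP: cardE; rewrite cards_eq0 => /eqP ->.
have [x xE] : exists x, x \in E by apply/card_gt0P; rewrite cardE.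
rewrite -(setD1K xE); apply: PU1; first by rewrite setD11.
by apply: IHm; move: cardE; rewrite (cardsD1 x E) xE => -[].
Qed.

Section RandomSubset.
Variables (R : realType) (K : finType) (p : R).
Implicit Types (D E S : {set K}) (f g : {set K} -> R).

Definition subset_weight E S : R := p ^+ #|S| * (1 - p) ^+ (#|E| - #|S|).

(* The mean of [f S] for the random subset [S] of [E] keeping each element
   independently with probability [p]. *)
Definition percE E f : R := \sum_(S in powerset E) subset_weight E S * f S.

Lemma eq_percE E f g : {in powerset E, f =1 g} -> percE E f = percE E g.
Proof. by move=> fg; apply: eq_bigr => S /fg ->. Qed.

Lemma percE0 f : percE set0 f = f set0.
Proof. by rewrite /percE powerset0 big_set1 /subset_weight cards0 !expr0 !mul1r. Qed.

Lemma percEZ E k f : percE E (fun S => k * f S) = k * percE E f.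
Proof. by rewrite /percE big_distrr; apply: eq_bigr => S _; rewrite mulrCA. Qed.

Lemma percE_sum (I : finType) E (F : I -> {set K} -> R) :
  percE E (fun S => \sum_i F i S) = \sum_i percE E (F i).
Proof. by rewrite /percE exchange_big; apply: eq_bigr => S _; rewrite big_distrr. Qed.

Lemma percEU1 x E f : x \notin E ->
  percE (x |: E) f = p * percE E (fun S => f (x |: S)) + (1 - p) * percE E f.
Proof.
move=> xE; have notin_sub S : S \subset E -> x \notin S.
  by move=> SE; apply: contraNN xE => /(subsetP SE).
rewrite /percE (bigID (fun S => x \in S)) /= !big_distrr /=; congr (_ + _).
- rewrite (reindex_onto (fun S => x |: S) (fun S => S :\ x)) /=; last first.
    by move=> S /andP[_ xS]; rewrite setD1K.
  apply: eq_big => [S|S].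
    rewrite !powersetE setU11 andbT.
    apply/andP/idP => [[SxE /eqP <-]|SE]; last first.
      by rewrite setUS // setU1K ?notin_sub.
    by rewrite -(setU1K xE) setSD.
  rewrite powersetE => /andP[_ /eqP SxS].
  have xS : x \notin S by rewrite -SxS setD11.
  by rewrite /subset_weight !cardsU1 xS xE /= !add1n subSS exprS !mulrA.
- apply: eq_big => [S|S].
    by rewrite !powersetE -subsetD1 setU1K.
  rewrite powersetE => /andP[SxE xS].
  have SE : S \subset E by rewrite -(setU1K xE) subsetD1 SxE.
  rewrite /subset_weight cardsU1 xE add1n subSn ?subset_leq_card //.
  by rewrite exprS; ring.
Qed.

Lemma percE_pow E z : percE E (fun S => z ^+ #|S|) = (1 - p + p * z) ^+ #|E|.
Proof.
elim/finset_ind: E => [|x E xE IH]; first by rewrite percE0 cards0.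
rewrite percEU1 // cardsU1 xE /= add1n exprS -IH.
rewrite (@eq_percE _ _ (fun S => z * z ^+ #|S|)) ?percEZ; first by ring.
move=> S; rewrite powersetE => SE.
by rewrite cardsU1 (contraNN (subsetP SE x)) // add1n exprS.
Qed.

Lemma percE_cst E k : percE E (fun _ => k) = k.
Proof.
have := percE_pow E 1; rewrite mulr1 subrK expr1n.
rewrite (@eq_percE _ _ (fun _ => 1)) => [one|S _]; last by rewrite expr1n.
by rewrite -[k]mulr1 -{2}one -percEZ.
Qed.

Lemma percEU D E f : [disjoint D & E] ->
  percE (D :|: E) f = percE D (fun X => percE E (fun Y => f (X :|: Y))).
Proof.
elim/finset_ind: D f => [|x D xD IH] f disDE.
  by rewrite set0U percE0; apply: eq_percE => S _; rewrite set0U.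
have [xE disDE'] : x \notin E /\ [disjoint D & E].
  by move: disDE; rewrite !disjoints_subset subUset sub1set inE => /andP[].
rewrite -setUA percEU1 ?inE ?negb_or ?xD // !IH // percEU1 //.
by congr (_ * _ + _); apply: eq_percE => S _; apply: eq_percE => Y _; rewrite setUA.
Qed.

Lemma percE_setID E (T : {set K}) (F : {set K} -> {set K} -> R) :
  percE E (fun S => F (S :&: T) (S :\: T)) =
  percE (E :&: T) (fun X => percE (E :\: T) (F X)).
Proof.
rewrite -{1}(setID E T) percEU; last first.
  by rewrite disjoints_subset; apply/subsetP => w; rewrite !inE => /andP[_ ->].
apply: eq_percE => X /=; rewrite powersetE => /subsetIP[_ XT].
apply: eq_percE => Y /=; rewrite powersetE => /subsetDP[_ YT]; congr F.
  by rewrite setIUl (setIidPl XT) (disjoint_setI0 YT) setU0.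
have /eqP XT0 : X :\: T == set0 by rewrite setD_eq0.
by rewrite setDUl (setDidPl YT) XT0 set0U.
Qed.

End RandomSubset.

Section Monotone.
Variables (R : realType) (K : finType) (p : R).
Hypotheses (p_ge0 : 0 <= p) (p_le1 : p <= 1).

Lemma subset_weight_ge0 (E S : {set K}) : 0 <= subset_weight p E S.
Proof. by rewrite mulr_ge0 // exprn_ge0 // subr_ge0. Qed.

Lemma ler_percE (E : {set K}) (f g : {set K} -> R) :
  {in powerset E, forall S, f S <= g S} -> percE p E f <= percE p E g.
Proof. by move=> fg; apply: ler_sum => S /fg; apply: ler_wpM2l; apply: subset_weight_ge0. Qed.

End Monotone.

Section Exploration.
Variable T : finType.
Implicit Types (a x y : T) (A V : {set T}) (S X : {set T * T}).

Definition adj S : rel T := fun x y => ((x, y) \in S) || ((y, x) \in S).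

Definition adj_in V S : rel T := fun x y => [&& x \in V, y \in V & adj S x y].

Definition reach V S A : {set T} :=
  [set y in V | [exists x in A, connect (adj_in V S) x y]].

Definition incident a : {set T * T} := [set xy | (xy.1 == a) || (xy.2 == a)].

Definition neighbours a S : {set T} := [set y | adj S a y].

Definition explore a V A X : {set T} := (A :\ a) :|: (neighbours a X :&: (V :\ a)).

Lemma reach0 V S : reach V S set0 = set0.
Proof.
by apply/setP => y; rewrite !inE; case: (y \in V) => //=; apply/existsP => -[x]; rewrite inE.
Qed.

Lemma connect_closed_in (e : rel T) (C : {set T}) x y :
  (forall u v, u \in C -> e u v -> v \in C) -> x \in C -> connect e x y -> y \in C.
Proof.
move=> closedC + /connectP[q + ->]; elim: q x => //= v q IHq x xC /andP[exv].
exact: IHq (closedC _ _ xC exv).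
Qed.

Lemma explore_sub a V A X : A \subset V -> explore a V A X \subset V :\ a.
Proof.
move=> AV; apply/subsetP => y; rewrite !inE => /orP[/andP[-> /(subsetP AV)->]|] //.
by case/andP.
Qed.

(* [a |: reach ...] contains [A] and is closed under the steps of [adj_in V S]. *)
Lemma reach_explore a V A S : a \in A -> A \subset V ->
  reach V S A \subset a |: reach (V :\ a) (S :\: incident a) (explore a V A (S :&: incident a)).
Proof.
move=> aA AV; set B := explore _ _ _ _; set C := a |: reach _ _ B.
have BC y : y \in B -> y \in C.
  move=> yB; have /subsetP/(_ y yB) yVa := explore_sub a (S :&: incident a) AV.
  by apply: setU1r; rewrite inE yVa; apply/existsP; exists y; rewrite yB connect0.
apply/subsetP => y; rewrite inE => /andP[_ /existsP[x /andP[xA]]].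
apply: connect_closed_in; last first.
  by case: (eqVneq x a) => [->|xa]; [rewrite setU11 | apply: BC; rewrite !inE xa xA].
move=> u v uC /and3P[uV vV Suv]; have [->|va] := eqVneq v a; first exact: setU11.
case/setU1P: uC => [ua|].
  apply: BC; rewrite !inE va vV -ua /=.
  by move: Suv; rewrite /adj !inE /= !eqxx !orbT !andbT => ->; rewrite orbT.
rewrite inE => /andP[uVa /existsP[w /andP[wB cwu]]].
apply: setU1r; rewrite !inE va vV /=; apply/existsP; exists w; rewrite wB /=.
apply: connect_trans cwu (connect1 _); move: uVa; rewrite !inE => /andP[ua uV'].
by rewrite /adj_in !inE ua uV' va vV /=; move: Suv; rewrite /adj !inE /= (negbTE ua) (negbTE va).
Qed.

Lemma card_neighbours a S : (#|neighbours a S| <= #|S|)%N.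
Proof.
pose other xy : T := if xy.1 == a then xy.2 else xy.1.
apply: leq_trans (leq_imset_card other S); apply/subset_leq_card/subsetP => y.
rewrite inE => /orP[Say|Sya]; apply/imsetP; first by exists (a, y); rewrite // /other eqxx.
by exists (y, a); rewrite // /other; case: eqVneq.
Qed.

Lemma card_explore a V A X : a \in A -> (#|explore a V A X| <= #|A|.-1 + #|X|)%N.
Proof.
move=> aA; apply: leq_trans (leq_card_setU _ _) _; apply: leq_add.
  by rewrite (cardsD1 a A) aA.
exact: leq_trans (subset_leq_card (subsetIl _ _)) (card_neighbours _ _).
Qed.

End Exploration.

Section ExplorationMoment.
Variables (R : realType) (T : finType) (p theta z : R) (d : nat).
Hypotheses (p_ge0 : 0 <= p) (p_le1 : p <= 1) (theta_ge1 : 1 <= theta) (z_ge1 : 1 <= z).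
Hypothesis theta_mgf : theta * (1 - p + p * z) ^+ d <= z.

(* Exploring a vertex of [A] costs one factor [theta] and replaces the vertex by the
   neighbours found along its at most [d] edges, each present with probability [p];
   [theta_mgf] says exactly that this step does not increase the bound. *)
Lemma reach_moment (V : {set T}) (E : {set T * T}) (A : {set T}) :
  (forall a, #|E :&: incident a| <= d)%N -> A \subset V ->
  percE p E (fun S => theta ^+ #|reach V S A|) <= z ^+ #|A|.
Proof.
move: (ltnSn #|V|); move: {2}#|V|.+1 => m.
elim: m V E A => // m IHm V E A ltVm degE AV.
have [->|[a aA]] := set_0Vmem A.
  by under eq_percE => S _ do rewrite reach0 cards0 expr0; rewrite percE_cst cards0.
have theta_ge0 : 0 <= theta := le_trans ler01 theta_ge1.
set B := explore a V A.
have le_step S : theta ^+ #|reach V S A| <=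
    theta * theta ^+ #|reach (V :\ a) (S :\: incident a) (B (S :&: incident a))|.
  rewrite -exprS; apply: ler_weXn2l => //.
  apply: leq_trans (subset_leq_card (reach_explore S aA AV)) _.
  by rewrite cardsU1 -add1n leq_add2r leq_b1.
apply: le_trans (ler_percE p_ge0 p_le1 (fun S _ => le_step S)) _.
rewrite (percE_setID _ _ _ (fun X Y => theta * theta ^+ #|reach (V :\ a) Y (B X)|)).
have le_IH X : percE p (E :\: incident a) (fun Y => theta ^+ #|reach (V :\ a) Y (B X)|)
    <= z ^+ #|A|.-1 * z ^+ #|X|.
  rewrite -exprD; apply: le_trans (ler_weXn2l z_ge1 (card_explore V X aA)).
  apply: IHm; last exact: explore_sub.
    by rewrite -ltnS (leq_trans _ ltVm) // ltnS (cardsD1 a V) (subsetP AV a aA).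
  by move=> b; apply: leq_trans (degE b); apply/subset_leq_card/setSI/subsetDl.
apply: le_trans (ler_percE p_ge0 p_le1 (g := fun X => theta * (z ^+ #|A|.-1 * z ^+ #|X|)) _) _.
  by move=> X _; rewrite percEZ; apply: ler_wpM2l (le_IH X).
have A_gt0 : (0 < #|A|)%N by apply/card_gt0P; exists a.
rewrite percEZ (percEZ _ _ _ (fun X => z ^+ #|X|)) percE_pow.
rewrite -[X in _ <= z ^+ X](prednK A_gt0) exprS mulrCA.
rewrite [leRHS]mulrC; apply: ler_wpM2l; first exact: exprn_ge0 (le_trans ler01 z_ge1).
apply: le_trans theta_mgf; apply: ler_wpM2l => //.
have mgf_ge1 : 1 <= 1 - p + p * z.
  by rewrite -addrA lerDl -{1}[p]mulr1 addrC -mulrBr mulr_ge0 // subr_ge0.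
exact: ler_weXn2l mgf_ge1 _ _ (degE a).
Qed.

End ExplorationMoment.

Section PercolationGraph.
Variables (n : nat) (e : rel 'I_n).

Lemma perc_probE (R : realType) (p : R) (P : pred {set 'I_n * 'I_n}) :
  perc_prob e p P = percE p (edges e) (fun S => (P S)%:R).
Proof.
rewrite /perc_prob /percE big_mkcondr /=; apply: eq_bigr => S _.
by case: (P S); rewrite ?mulr1 ?mulr0.
Qed.

Lemma reach_component (S : {set 'I_n * 'I_n}) (x : 'I_n) :
  reach [set: 'I_n] S [set x] = component S x.
Proof.
apply/setP => y; rewrite !inE; apply/existsP/idP => [[w /andP[/set1P-> cxy]]|cxy].
  by rewrite -(@eq_connect _ (adj_in [set: 'I_n] S)) // => u v; rewrite /adj_in !inE.
by exists x; rewrite set11 (@eq_connect _ _ (kept S)) // => u v; rewrite /adj_in !inE.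
Qed.

Lemma card_edges_incident (d : nat) : simple_graph e -> regular e d ->
  forall a, (#|edges e :&: incident a| <= d)%N.
Proof.
move=> [e_sym _] e_reg a; pose other (xy : 'I_n * 'I_n) := if xy.1 == a then xy.2 else xy.1.
rewrite -(e_reg a) -(card_in_imset (f := other)).
  apply/subset_leq_card/subsetP => y /imsetP[[x1 y1]].
  rewrite !inE /other /= => /andP[/andP[_ e1] inc] ->.
  by case: (eqVneq x1 a) inc => [<-|_] //= /eqP <-; rewrite e_sym.
move=> [x1 y1] [x2 y2]; rewrite !inE /other /=.
move=> /andP[/andP[lt1 _] inc1] /andP[/andP[lt2 _] inc2].
case: (eqVneq x1 a) inc1 lt1 => [->|_] /= => [_|/eqP->] lt1;
  case: (eqVneq x2 a) inc2 lt2 => [->|_] /= => [_|/eqP->] lt2 eq12; rewrite ?eq12 //.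
- by have := ltn_trans lt2 lt1; rewrite eq12 ltnn.
- by have := ltn_trans lt1 lt2; rewrite eq12 ltnn.
Qed.

End PercolationGraph.

Section Estimates.
Variable R : realType.

Lemma expR_mul_sqr1B_le1 (u : R) : u <= 1 -> expR (2 * u) * (1 - u) ^+ 2 <= 1.
Proof.
move=> u_le1; rewrite -[leRHS](expRxMexpNx_1 (2 * u)) ler_pM2l ?expR_gt0 //.
rewrite -mulrN expRM_natl; apply: lerXn2r; rewrite ?nnegrE ?subr_ge0 ?expR_ge0 //.
by have := expR_ge1Dx (- u); rewrite addrC.
Qed.

Lemma expR_le1Dx_small (x : R) : 0 <= x <= 1 / 10 ->
  expR (x ^+ 2 / 6 + (1 - x) * x) <= 1 + x.
Proof.
case/andP=> x_ge0 x_le; set u := (x ^+ 2 / 6 + (1 - x) * x) / 2.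
have u_lt1 : u < 1 by rewrite /u; nra.
have sqr_gt0 : 0 < (1 - u) ^+ 2 by rewrite exprn_gt0 // subr_gt0.
have key : 1 <= (1 + x) * (1 - u) ^+ 2.
  have -> : (1 + x) * (1 - u) ^+ 2 =
            1 + x ^+ 2 * (1 / 12 + 2 / 3 * x - 35 / 144 * x ^+ 2 + 25 / 144 * x ^+ 3).
    by rewrite /u; field.
  rewrite lerDl mulr_ge0 ?sqr_ge0 //; nra.
have := expR_mul_sqr1B_le1 (ltW u_lt1); rewrite [2 * u]mulrC divfK //; nra.
Qed.

Lemma subcritical_mgf (eps p : R) (d : nat) : 0 <= eps <= 1 / 10 -> 0 <= p ->
  d%:R * p = 1 - eps -> expR (eps ^+ 2 / 6) * (1 - p + p * (1 + eps)) ^+ d <= 1 + eps.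
Proof.
move=> eps_bounds p_ge0 dp; apply: le_trans (expR_le1Dx_small eps_bounds).
rewrite expRD ler_pM2l ?expR_gt0 // -dp -mulrA expRM_natl.
have -> : 1 - p + p * (1 + eps) = 1 + p * eps by ring.
apply: lerXn2r; rewrite ?nnegrE ?expR_ge0 ?expR_ge1Dx //.
by rewrite addr_ge0 ?mulr_ge0 //; case/andP: eps_bounds.
Qed.

Lemma subcritical_p_bounds (eps : R) (d : nat) : (0 < d)%N -> 0 < eps -> eps <= 1 / 10 ->
  0 <= (1 - eps) / d%:R <= 1.
Proof.
move=> d_gt0 eps_gt0 eps_le; have d_ge1 : 1 <= d%:R :> R by rewrite ler1n.
by rewrite divr_ge0 ?ler_pdivrMr ?ltr0n // ?mul1r; lra.
Qed.

Lemma mul_expR_ln_le (x delta : R) : 0 < delta -> 4 / delta ^+ 2 <= x ->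
  x * expR (- (3 / 2 * ln x)) <= delta / 2.
Proof.
move=> delta_gt0 x_ge.
have x_gt0 : 0 < x by apply: lt_le_trans x_ge; rewrite divr_gt0 ?exprn_gt0.
have [x_ge0 delta_ge0] := (ltW x_gt0, ltW delta_gt0).
rewrite -(ler_pXn2r (_ : (0 < 2)%N)) ?nnegrE ?mulr_ge0 ?expR_ge0 ?divr_ge0 //.
have -> : (x * expR (- (3 / 2 * ln x))) ^+ 2 = x^-1.
  rewrite exprMn -expRM_natl.
  have -> : 2%:R * - (3 / 2 * ln x) = - (3%:R * ln x) by field.
  rewrite expRN expRM_natl lnK ?posrE //; field; exact: lt0r_neq0.
have -> : (delta / 2) ^+ 2 = (4 / delta ^+ 2)^-1 by field; exact: lt0r_neq0.
by rewrite lef_pV2 ?posrE ?divr_gt0 ?exprn_gt0.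
Qed.

End Estimates.

Section BigComponent.
Variables (R : realType) (n : nat) (e : rel 'I_n).

Lemma has_big_component_le (M c : R) (S : {set 'I_n * 'I_n}) : 0 <= c ->
  (has_big_component M S)%:R <=
  expR (- (c * M)) * \sum_(v : 'I_n) expR c ^+ #|component S v|.
Proof.
move=> c_ge0; rewrite mulr_sumr /has_big_component.
have terms_ge0 (P : pred 'I_n) :
    0 <= \sum_(v | P v) expR (- (c * M)) * expR c ^+ #|component S v|.
  by apply: sumr_ge0 => v _; rewrite mulr_ge0 ?exprn_ge0 ?expR_ge0.
case: existsP => [[v big_v]|_]; last exact: terms_ge0.
rewrite (bigD1 v) //= -[1]addr0 lerD // -expRM_natl -expRD.
apply: le_trans (expR_ge1Dx _).
by rewrite lerDl addrC subr_ge0 [_ * c]mulrC (ler_wpM2l c_ge0 (ltW big_v)).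
Qed.

(* Markov's inequality for [expR c ^+ #|component S v|], summed over the vertices [v]. *)
Lemma perc_prob_big_component_le (p M c b : R) : 0 <= p <= 1 -> 0 <= c ->
  (forall v, percE p (edges e) (fun S => expR c ^+ #|component S v|) <= b) ->
  perc_prob e p (has_big_component M) <= expR (- (c * M)) * (b *+ n).
Proof.
case/andP=> p_ge0 p_le1 c_ge0 moment_le; rewrite perc_probE.
apply: le_trans (ler_percE p_ge0 p_le1 (fun S _ => has_big_component_le M S c_ge0)) _.
rewrite percEZ percE_sum -[X in b *+ X](card_ord n) -sumr_const.
by rewrite ler_pM2l ?expR_gt0 //; apply: ler_sum => v _; apply: moment_le.
Qed.

Lemma component_moment_le (d : nat) (eps : R) :
  simple_graph e -> regular e d -> (0 < d)%N -> 0 < eps <= 1 / 10 ->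
  forall v, percE ((1 - eps) / d%:R) (edges e)
              (fun S => expR (eps ^+ 2 / 6) ^+ #|component S v|) <= 1 + eps.
Proof.
move=> e_simple e_regular d_gt0 /andP[eps_gt0 eps_le] v.
have /andP[p_ge0 p_le1] := subcritical_p_bounds d_gt0 eps_gt0 eps_le.
have dp : d%:R * ((1 - eps) / d%:R) = 1 - eps by rewrite mulrC divfK // pnatr_eq0 -lt0n.
have eps_bounds : 0 <= eps <= 1 / 10 by rewrite ltW.
rewrite -[leRHS]expr1 -[X in _ <= _ ^+ X](cards1 v).
under eq_percE => S _ do rewrite -reach_component.
apply: (reach_moment p_ge0 p_le1 _ _ (subcritical_mgf eps_bounds p_ge0 dp) _ (subsetT _)).
- by rewrite ltW // expR_gt1 divr_gt0 ?exprn_gt0.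
- by rewrite lerDl ltW.
- exact: card_edges_incident.
Qed.

End BigComponent.

Theorem mainTheorem1 (R : realType) :
  exists eps0 : R, 0 < eps0 /\
  forall eps : R, 0 < eps -> eps < eps0 ->
  forall delta : R, 0 < delta ->
  exists N : nat, forall (n : nat), (N <= n)%N ->
  forall (d : nat) (e : rel 'I_n), (1 <= d)%N ->
    simple_graph e -> regular e d ->
    perc_prob e ((1 - eps) / d%:R)
      (has_big_component (9 * ln (n%:R : R) / eps ^+ 2)) <= delta.
Proof.
exists (1 / 10); split=> // eps eps_gt0 eps_lt delta delta_gt0.
exists (Num.Def.archi_bound (4 / delta ^+ 2)) => n n_ge d e d_gt0 e_simple e_regular.
have n_large : 4 / delta ^+ 2 <= n%:R.
  apply/ltW/(lt_le_trans (archi_boundP _)); last by rewrite ler_nat.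
  by rewrite divr_ge0 ?exprn_ge0 ?ltW.
have eps_bounds : 0 < eps <= 1 / 10 by rewrite eps_gt0 ltW.
have c_ge0 : 0 <= eps ^+ 2 / 6 by rewrite divr_ge0 ?sqr_ge0.
apply: le_trans (perc_prob_big_component_le _ (subcritical_p_bounds d_gt0 eps_gt0 (ltW eps_lt))
  c_ge0 (component_moment_le e_simple e_regular d_gt0 eps_bounds)) _.
have -> : eps ^+ 2 / 6 * (9 * ln n%:R / eps ^+ 2) = 3 / 2 * ln n%:R.
  by field; exact: lt0r_neq0.
have decay := mul_expR_ln_le delta_gt0 n_large.
have decay_ge0 : 0 <= n%:R * expR (- (3 / 2 * ln (n%:R : R))) by rewrite mulr_ge0 ?expR_ge0.
rewrite -[(1 + eps) *+ n]mulr_natr mulrCA [_ * n%:R]mulrC; nra.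
Qed.
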